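(* Let $n\ge5$ be odd, $k=\frac{n-3}{2}$, $G=(V,E)=K_n$, let $C=(v_1,\dots,v_{2k+1})$ be a cycle of length $n-2$ in $G$ and $s,t$ the two vertices not on $C$. Then the $C$-induced constraint $x_{\{s,t\}}+k\cdot x(\delta(V(C)))+\sum_{e\in E[V\setminus\{s,t\}]}\ell(e)x_e\ge 2k+1$ is $(n-1)$-expressing.
   Context: $\delta(V(C))$ is the set of edges with exactly one endpoint on $C$, $E[S]$ the set of edges with both endpoints in $S$, $x(S)=\sum_{e\in S}x_e$. For $i\ne j$, $\ell(\{v_i,v_j\})=|j-i|$ if $|j-i|$ is odd and $2k+1-|j-i|$ otherwise. Expressibility of a constraint $a^\top x\ge b$ valid for the dominant of the odd cycle polytope of $G$: let $\mathcal{T}$ be the set of odd cycles $D$ of $G$ with $a^\top\chi^D=b$. For $Q\subseteq E$, the set $E_Q$ of $Q$-expressible edges is obtained by starting with $E_Q=Q$ and, as long as there exist $e\in E\setminus E_Q$ and $D\in\mathcal{T}$ with $e\in D$ and $D\setminus\{e\}\subseteq E_Q$, adding $e$ to $E_Q$. The constraint is $k'$-expressing if there is $Q\subseteq E$ with $|Q|\le k'$ and $E_Q=E$. *)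

From mathcomp Require Import all_boot.
Set Implicit Arguments. Unset Strict Implicit. Unset Printing Implicit Defensive.

(* The complete graph K_n on vertex set 'I_n; an edge is a 2-element vertex set. *)
Definition edges (n : nat) : {set {set 'I_n}} := [set e : {set 'I_n} | #|e| == 2].

(* D is (the edge set of) an odd cycle of K_n: a closed walk w_0 .. w_(m-1) w_0
   through m >= 3 (m odd) pairwise distinct vertices. *)
Definition is_odd_cycle (n : nat) (D : {set {set 'I_n}}) : Prop :=
  exists (m : nat) (w : 'I_m.+3 -> 'I_n),
    odd m.+3 /\ injective w /\
    D = [set [set w i; w (inord (i.+1 %% m.+3))] | i : 'I_m.+3].

(* ell({v_i, v_j}) for the cycle C = (v_0, ..., v_(n-3)) of length n-2 = 2k+1, i < j *)
Definition ell (n : nat) (i j : 'I_(n - 2)) : nat :=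
  let d := j - i in if odd d then d else (n - 2) - d.

Definition lhs (n : nat) (v : 'I_(n - 2) -> 'I_n) (s t : 'I_n)
    (D : {set {set 'I_n}}) : nat :=
  let VC := [set v i | i : 'I_(n - 2)] in
  let k := (n - 3)./2 in
  ([set s; t] \in D)
  + k * #|[set e in D | (e \in edges n) && (#|e :&: VC| == 1)]|
  + \sum_(i : 'I_(n - 2)) \sum_(j : 'I_(n - 2) | i < j)
        ell i j * ([set v i; v j] \in D).

(* the tight odd cycles: odd cycles D with a^T chi^D = b = 2k+1 = n-2 *)
Definition tight (n : nat) (v : 'I_(n - 2) -> 'I_n) (s t : 'I_n)
    (D : {set {set 'I_n}}) : Prop :=
  is_odd_cycle D /\ lhs v s t D = n - 2.

Inductive expressible (n : nat) (T : {set {set 'I_n}} -> Prop)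
    (Q : {set {set 'I_n}}) : {set 'I_n} -> Prop :=
| expr_base e : e \in Q -> expressible T Q e
| expr_step e D : T D -> e \in D ->
    (forall f, f \in D -> f != e -> expressible T Q f) -> expressible T Q e.

Definition k_expressing (n : nat) (T : {set {set 'I_n}} -> Prop) (k' : nat) : Prop :=
  exists Q : {set {set 'I_n}}, Q \subset edges n /\ #|Q| <= k' /\
    forall e, e \in edges n -> expressible T Q e.

From mathcomp Require Import all_boot zify.
Set Implicit Arguments. Unset Strict Implicit. Unset Printing Implicit Defensive.

(* Write N = n - 2 = 2k + 1 and v_0, ..., v_(N-1) for the cycle C, indices
   taken mod N. The left-hand side is a sum of edge coefficients: 1 on st,
   k on the edges between {s, t} and C, and ell on the chords of C; hence
   every edge of C has coefficient 1 and a chord spanning d steps of C has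
   coefficient d if d is odd and N - d if d is even. Let Q consist of the
   N edges s v_i and the edge t v_0, so |Q| = n - 1. The tight triangles
   t v_0 s, v_i s t and v_(i+1) s v_i (coefficients k + k + 1 = N) make st,
   every t v_i and every edge of C expressible. Finally every chord closes a
   tight odd cycle with the arc of C of even length d between its endpoints,
   of coefficient d * 1 + (N - d) = N. *)

Lemma nat_of_in (T : finType) (D : {set T}) x : (x \in D : nat) = \sum_(e in D) (e == x).
Proof.
have [xD | xD] := boolP (x \in D).
  by rewrite (bigD1 x) //= eqxx big1 // => e /andP[_ /negbTE->].
by rewrite big1 // => e eD; apply/eqP; rewrite eqb0; apply: contraNneq xD => <-.
Qed.

Lemma card_sep_sum (T : finType) (D : {set T}) (P : pred T) :
  #|[set e in D | P e]| = \sum_(e in D) P e.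
Proof.
rewrite -sum1_card big_mkcond [RHS]big_mkcond; apply: eq_bigr => e _.
by rewrite inE; case: (e \in D); case: (P e).
Qed.

Lemma val_ordS m (i : 'I_m) : ordS i = (if i.+1 < m then i.+1 else 0) :> nat.
Proof.
rewrite /=; case: ltnP => [/modn_small // | im].
have -> : i.+1 = m by have := ltn_ord i; lia.
exact: modnn.
Qed.

Lemma ordSS_neq m (i : 'I_m.+3) : ordS (ordS i) != i.
Proof.
apply/eqP => /(congr1 (@nat_of_ord _)); have := ltn_ord i; rewrite !val_ordS.
by case: ifP => /=; case: ifP; lia.
Qed.

Lemma ordS_neq m (i : 'I_m) : 1 < m -> ordS i != i.
Proof.
move=> m_gt1; apply/eqP => /(congr1 (@nat_of_ord _)); have := ltn_ord i.
by rewrite val_ordS; case: ifP; lia.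
Qed.

Lemma neq_ord_max_ltn m (i : 'I_m.+1) : i != ord_max -> i < m.
Proof.
by rewrite ltn_neqAle -ltnS ltn_ord andbT; apply: contra => /eqP i_m; apply/eqP/ord_inj.
Qed.

Lemma val_iter_ordS m (a : 'I_m) d : iter d (@ordS m) a = (a + d) %% m :> nat.
Proof.
elim: d => [|d IH]; first by rewrite addn0 modn_small.
by rewrite iterS /= IH -addn1 modnDml -addnA addn1.
Qed.

Definition walk_edges n m (w : 'I_m -> 'I_n) : {set {set 'I_n}} :=
  [set [set w i; w (ordS i)] | i : 'I_m].

Section OddClosedWalks.
Variables (n m : nat) (w : 'I_m.+3 -> 'I_n).
Hypothesis w_inj : injective w.

Lemma walk_edges_odd_cycle : odd m.+3 -> is_odd_cycle (walk_edges w).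
Proof.
move=> m_odd; exists m, w; split=> //; split=> //.
apply: eq_imset => i; congr [set _; w _].
by apply: val_inj; rewrite /= inordK // ltn_pmod.
Qed.

Lemma walk_edge_inj : injective (fun i => [set w i; w (ordS i)]).
Proof.
move=> i j /= eq_ij.
have /set2P[/w_inj // | /w_inj i_Sj] : w i \in [set w j; w (ordS j)].
  by rewrite -eq_ij set21.
have /set2P[/w_inj Si_j | /w_inj/ordS_inj //] : w (ordS i) \in [set w j; w (ordS j)].
  by rewrite -eq_ij set22.
by case/eqP: (ordSS_neq j); rewrite -i_Sj.
Qed.

Lemma sum_walk_edges (F : {set 'I_n} -> nat) :
  \sum_(e in walk_edges w) F e = \sum_i F [set w i; w (ordS i)].
Proof. by rewrite big_imset //; apply: in2W; exact: walk_edge_inj. Qed.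

End OddClosedWalks.

Section Triangle.
Variables (n : nat) (x y z : 'I_n).

Definition triangle : 'I_3 -> 'I_n := tnth [tuple x; y; z].

Lemma triangle_inj : x != y -> y != z -> z != x -> injective triangle.
Proof.
by move=> xy yz zx; apply/tuple_uniqP; rewrite /= !inE negb_or xy yz eq_sym zx.
Qed.

End Triangle.

Definition arc (N m : nat) (a : 'I_N) (i : 'I_m) : 'I_N := iter i (@ordS N) a.

Section Arcs.
Variables (N m : nat) (a : 'I_N).

Lemma arc_inj : m <= N -> injective (@arc N m a).
Proof.
move=> mN i j /(congr1 (@nat_of_ord _)); rewrite /arc !val_iter_ordS => /eqP.
rewrite eqn_modDl !modn_small => [/eqP/ord_inj //||]; exact: leq_trans (ltn_ord _) mN.
Qed.

Lemma arc_ordS (i : 'I_m.+1) : i < m -> arc a (ordS i) = ordS (arc a i).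
Proof. by move=> i_lt; rewrite /arc val_ordS ltnS i_lt. Qed.

Lemma arc_ordS_max : arc a (ordS (@ord_max m)) = a.
Proof. by rewrite /arc /= modnn. Qed.

End Arcs.

Section Expressibility.
Variables (n : nat) (T : {set {set 'I_n}} -> Prop) (Q : {set {set 'I_n}}).

Lemma expressible_sym x y : expressible T Q [set x; y] -> expressible T Q [set y; x].
Proof. by rewrite setUC. Qed.

Lemma expressible_last_edge m (w : 'I_m.+1 -> 'I_n) : T (walk_edges w) ->
  (forall i, i != ord_max -> expressible T Q [set w i; w (ordS i)]) ->
  expressible T Q [set w ord_max; w (ordS ord_max)].
Proof.
move=> T_w X_w; apply: (expr_step T_w); first exact: imset_f.
by move=> _ /imsetP[i _ ->] edge_i; apply: X_w; apply: contraNneq edge_i => ->.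
Qed.

End Expressibility.

Section ConstraintCoefficients.
Variables (n : nat) (v : 'I_(n - 2) -> 'I_n) (s t : 'I_n).
Hypotheses (v_inj : injective v) (v_neq_s : forall i, v i != s)
  (v_neq_t : forall i, v i != t).

Definition cycle_vertices := [set v i | i : 'I_(n - 2)].

Definition chord_coef (e : {set 'I_n}) : nat :=
  \sum_(i : 'I_(n - 2)) \sum_(j : 'I_(n - 2) | i < j) ell i j * ([set v i; v j] == e).

Definition constraint_coef (e : {set 'I_n}) : nat :=
  (e == [set s; t])
  + (n - 3)./2 * ((e \in edges n) && (#|e :&: cycle_vertices| == 1))
  + chord_coef e.

Lemma lhs_sum_coef D : lhs v s t D = \sum_(e in D) constraint_coef e.
Proof.
rewrite /lhs /constraint_coef /chord_coef !big_split /=; congr (_ + _ + _).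
- exact: nat_of_in.
- by rewrite card_sep_sum big_distrr.
- under eq_bigr => i _ do under eq_bigr => j _ do rewrite nat_of_in big_distrr /=.
  under eq_bigr => i _ do rewrite exchange_big /=.
  rewrite exchange_big; apply: eq_bigr => e _; apply: eq_bigr => i _.
  by apply: eq_bigr => j _; rewrite eq_sym.
Qed.

Lemma cycle_verticesP x : reflect (exists i, x = v i) (x \in cycle_vertices).
Proof. by apply: (iffP imsetP) => [[i _ ->] | [i ->]]; exists i. Qed.

Lemma chord_coef_off_cycle (e : {set 'I_n}) x :
  x \in e -> x \notin cycle_vertices -> chord_coef e = 0.
Proof.
move=> xe /cycle_verticesP x_out; apply: big1 => i _; apply: big1 => j _.
case: eqP => [eq_e | _]; last by rewrite muln0.
by case: x_out; move: xe; rewrite -eq_e => /set2P[] ->; eexists.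
Qed.

Lemma notin_cycle_vertices x : (forall i, v i != x) -> x \notin cycle_vertices.
Proof. by move=> v_neq_x; apply/cycle_verticesP => -[i xi]; case/eqP: (v_neq_x i). Qed.

Lemma coef_st : constraint_coef [set s; t] = 1.
Proof.
rewrite /constraint_coef eqxx.
rewrite (chord_coef_off_cycle (set21 s t) (notin_cycle_vertices v_neq_s)).
suff -> : [set s; t] :&: cycle_vertices = set0 by rewrite cards0 andbF muln0.
apply/setP => x; rewrite in_set0 in_setI.
case: (boolP (x \in cycle_vertices)) => [/cycle_verticesP[i ->] | _]; last by rewrite andbF.
by rewrite !inE andbT (negbTE (v_neq_s i)) (negbTE (v_neq_t i)).
Qed.

Lemma coef_cut x a : (forall i, v i != x) ->
  constraint_coef [set x; v a] = (n - 3)./2.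
Proof.
move=> v_neq_x; rewrite /constraint_coef.
rewrite (chord_coef_off_cycle (set21 x (v a)) (notin_cycle_vertices v_neq_x)) addn0.
have -> : ([set x; v a] == [set s; t]) = false.
  apply/negbTE/eqP => eq_st; move: (set22 x (v a)); rewrite eq_st !inE.
  by rewrite (negbTE (v_neq_s a)) (negbTE (v_neq_t a)).
have -> : [set x; v a] \in edges n by rewrite inE cards2 [x == _]eq_sym v_neq_x.
suff -> : [set x; v a] :&: cycle_vertices = [set v a] by rewrite cards1 muln1.
apply/setP => y; rewrite !inE; have [-> | ] := eqVneq y (v a).
  by rewrite orbT; apply/cycle_verticesP; exists a.
rewrite orbF andbC => _; case: (boolP (y \in cycle_vertices)) => //.
by case/cycle_verticesP => i ->; rewrite (negbTE (v_neq_x i)).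
Qed.

Lemma eq_chord (i j a b : 'I_(n - 2)) : i < j -> a < b ->
  ([set v i; v j] == [set v a; v b]) = (i == a) && (j == b).
Proof.
move=> ij ab; apply/eqP/andP => [eq_ab | [/eqP-> /eqP->] //].
move: (set21 (v i) (v j)) (set22 (v i) (v j)).
rewrite eq_ab !inE !(inj_eq v_inj) -!val_eqE /=; lia.
Qed.

Lemma coef_chord (a b : 'I_(n - 2)) : a < b -> constraint_coef [set v a; v b] = ell a b.
Proof.
move=> ab; rewrite /constraint_coef.
have -> : ([set v a; v b] == [set s; t]) = false.
  apply/negbTE/eqP => eq_st; move: (set21 (v a) (v b)); rewrite eq_st !inE.
  by rewrite (negbTE (v_neq_s a)) (negbTE (v_neq_t a)).
have -> : [set v a; v b] :&: cycle_vertices = [set v a; v b].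
  by apply/setIidPl/subsetP => x /set2P[] ->; apply/cycle_verticesP; eexists.
rewrite cards2 (inj_eq v_inj) -val_eqE (ltn_eqF ab) andbF muln0 /chord_coef.
rewrite (bigD1 a) //= (bigD1 b) //= eq_chord // !eqxx muln1.
rewrite big1 => [|j /andP[aj j_b]]; last by rewrite eq_chord // eqxx (negPf j_b) muln0.
rewrite big1 => [|i i_a]; last by apply: big1 => j ij; rewrite eq_chord // (negPf i_a) muln0.
by rewrite !addn0.
Qed.

Hypothesis N_odd : odd (n - 2).

Lemma coef_arc a d : 0 < d < n - 2 ->
  constraint_coef [set v a; v (iter d (@ordS _) a)] = if odd d then d else n - 2 - d.
Proof.
move=> /andP[d_gt0 d_lt]; set b := iter d _ a.
have b_val : b = (a + d) %% (n - 2) :> nat := val_iter_ordS a d.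
have a_lt := ltn_ord a.
have [ad_lt | ad_ge] := ltnP (a + d) (n - 2).
  rewrite modn_small // in b_val.
  rewrite coef_chord /ell; last by rewrite b_val; lia.
  by rewrite b_val addKn.
have {}b_val : b = a + d - (n - 2) :> nat.
  by rewrite b_val -(subnK ad_ge) modnDr modn_small; lia.
rewrite setUC coef_chord /ell; last by rewrite b_val; lia.
have -> : a - b = n - 2 - d by rewrite b_val; lia.
by rewrite oddB ?N_odd; [case: (odd d) => /=; lia | lia].
Qed.

Lemma coef_cycle_edge c : 1 < n - 2 -> constraint_coef [set v c; v (ordS c)] = 1.
Proof. by move=> N_gt1; have := coef_arc c (d := 1); apply; rewrite N_gt1. Qed.

Lemma walk_edges_tight m (w : 'I_m.+3 -> 'I_n) : odd m.+3 -> injective w ->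
  \sum_i constraint_coef [set w i; w (ordS i)] = n - 2 -> tight v s t (walk_edges w).
Proof.
move=> m_odd w_inj coef_w; split; first exact: walk_edges_odd_cycle.
by rewrite lhs_sum_coef sum_walk_edges.
Qed.

Variable Q : {set {set 'I_n}}.
Notation X := (expressible (tight v s t) Q).

Lemma expressible_triangle x y z : x != y -> y != z -> z != x ->
  constraint_coef [set x; y] + constraint_coef [set y; z] + constraint_coef [set z; x]
    = n - 2 ->
  X [set x; y] -> X [set y; z] -> X [set z; x].
Proof.
move=> xy yz zx coef_xyz X_xy X_yz.
apply: (@expressible_last_edge _ _ _ 2 (triangle x y z)); last by case=> [[|[|[|?]]] ?].
apply: walk_edges_tight; [by [] | exact: triangle_inj |].
by rewrite !big_ord_recr big_ord0; exact: coef_xyz.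
Qed.

Lemma expressible_arc_chord a d : ~~ odd d -> 0 < d < n - 2 ->
  (forall c, X [set v c; v (ordS c)]) -> X [set v a; v (iter d (@ordS _) a)].
Proof.
case: d => [|[|d]] // d_even /andP[_ d_lt] X_cycle.
pose w i := v (@arc _ d.+3 a i).
have w_inj : injective w by move=> i j /v_inj; apply: arc_inj; lia.
have w_cycle (i : 'I_d.+3) :
    i < d.+2 -> [set w i; w (ordS i)] = [set v (arc a i); v (ordS (arc a i))].
  by move=> i_lt; rewrite /w arc_ordS.
have w_max : [set w ord_max; w (ordS ord_max)] = [set v a; v (iter d.+2 (@ordS _) a)].
  by rewrite /w arc_ordS_max setUC.
have coef_w : \sum_i constraint_coef [set w i; w (ordS i)] = n - 2.
  rewrite big_ord_recr w_max coef_arc ?d_lt // (negbTE d_even).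
  rewrite (eq_bigr (fun _ => 1)) => [|i _].
    by rewrite sum1_card card_ord; exact: subnKC (ltnW d_lt).
  move: (w_cycle (widen_ord (leqnSn _) i) (ltn_ord i)) => ->.
  by rewrite coef_cycle_edge //; lia.
have := expressible_last_edge (walk_edges_tight d_even w_inj coef_w); rewrite w_max; apply.
by move=> i /neq_ord_max_ltn i_lt; rewrite w_cycle.
Qed.

Lemma expressible_chord a b : a != b ->
  (forall c, X [set v c; v (ordS c)]) -> X [set v a; v b].
Proof.
move=> a_b X_cycle.
wlog ab : a b {a_b} / a < b.
  move=> chord; move: a_b; rewrite neq_ltn => /orP[/chord // | /chord].
  exact: expressible_sym.
have b_lt := ltn_ord b.
have [odd_ba | even_ba] := boolP (odd (b - a)).
  have arc_ba : iter (n - 2 - (b - a)) (@ordS _) b = a.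
    apply: ord_inj; rewrite val_iter_ordS.
    have -> : b + (n - 2 - (b - a)) = a + (n - 2) by lia.
    by rewrite modnDr modn_small.
  have := @expressible_arc_chord b (n - 2 - (b - a)); rewrite arc_ba.
  move=> X_ba; apply/expressible_sym/X_ba => //; last by lia.
  by rewrite oddB ?N_odd ?odd_ba //; lia.
have arc_ab : iter (b - a) (@ordS _) a = b.
  by apply: ord_inj; rewrite val_iter_ordS subnKC ?modn_small // ltnW.
by have := @expressible_arc_chord a (b - a); rewrite arc_ab; apply => //; lia.
Qed.

Lemma addnn_half_sub3 : (n - 3)./2 + (n - 3)./2 = n - 3.
Proof.
have N_gt0 : 0 < n - 2 by case: (n - 2) N_odd.
have even_n3 : ~~ odd (n - 3).
  have -> : n - 3 = n - 2 - 1 by lia.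
  by rewrite oddB // N_odd.
by rewrite addnn -[RHS]odd_double_half (negbTE even_n3).
Qed.

Lemma cycle_verticesC : s != t -> cycle_vertices = ~: [set s; t].
Proof.
move=> s_neq_t; apply/eqP; rewrite eqEcard; apply/andP; split.
  apply/subsetP => x /cycle_verticesP[i ->].
  by rewrite !inE (negbTE (v_neq_s i)) (negbTE (v_neq_t i)).
by rewrite cardsCs setCK card_imset // !card_ord cards2 s_neq_t.
Qed.

Variable a0 : 'I_(n - 2).
Hypotheses (N_gt1 : 1 < n - 2) (s_neq_t : s != t).
Hypotheses (X_s : forall i, X [set s; v i]) (X_t0 : X [set t; v a0]).

Lemma expressible_st : X [set s; t].
Proof.
have coef_sum : constraint_coef [set t; v a0] + constraint_coef [set v a0; s]
                + constraint_coef [set s; t] = n - 2.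
  by rewrite [[set v a0; s]]setUC !coef_cut // coef_st; have := addnn_half_sub3; lia.
apply: (expressible_triangle _ (v_neq_s a0) s_neq_t coef_sum X_t0).
- by rewrite eq_sym.
- exact/expressible_sym/X_s.
Qed.

Lemma expressible_tv i : X [set t; v i].
Proof.
have coef_sum : constraint_coef [set v i; s] + constraint_coef [set s; t]
                + constraint_coef [set t; v i] = n - 2.
  by rewrite [[set v i; s]]setUC !coef_cut // coef_st; have := addnn_half_sub3; lia.
apply: (expressible_triangle (v_neq_s i) s_neq_t _ coef_sum _ expressible_st).
- by rewrite eq_sym.
- exact/expressible_sym/X_s.
Qed.

Lemma expressible_cycle_edge c : X [set v c; v (ordS c)].
Proof.
have coef_sum : constraint_coef [set v (ordS c); s] + constraint_coef [set s; v c]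
                + constraint_coef [set v c; v (ordS c)] = n - 2.
  rewrite [[set v (ordS c); s]]setUC !(coef_cut _ v_neq_s) coef_cycle_edge //.
  by have := addnn_half_sub3; lia.
apply: (expressible_triangle (v_neq_s _) _ _ coef_sum _ (X_s c)).
- by rewrite eq_sym.
- by rewrite (inj_eq v_inj) eq_sym ordS_neq.
- exact/expressible_sym/X_s.
Qed.

Lemma expressible_edge x y : x != y -> X [set x; y].
Proof.
have vertexP z : [\/ z = s, z = t | exists i, z = v i].
  have [/cycle_verticesP | ] := boolP (z \in cycle_vertices); first by constructor 3.
  by rewrite cycle_verticesC // !inE negbK => /orP[]/eqP; [constructor 1 | constructor 2].
have X_vv i j : i != j -> X [set v i; v j].
  by move=> ij; apply: expressible_chord => //; exact: expressible_cycle_edge.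
case: (vertexP x) (vertexP y) => [->|->|[i ->]] [->|->|[j ->]]; rewrite ?eqxx // => xy.
- exact: expressible_st.
- exact/expressible_sym/expressible_st.
- exact: expressible_tv.
- exact/expressible_sym/X_s.
- exact/expressible_sym/expressible_tv.
- by apply: X_vv; apply: contraNneq xy => ->.
Qed.

End ConstraintCoefficients.

Theorem lemma10 (n : nat) (v : 'I_(n - 2) -> 'I_n) (s t : 'I_n) :
  5 <= n -> odd n -> injective v -> s != t ->
  (forall i, v i != s) -> (forall i, v i != t) ->
  k_expressing (tight v s t) (n - 1).
Proof.
move=> n_ge5 n_odd v_inj s_neq_t v_neq_s v_neq_t.
have N_odd : odd (n - 2) by rewrite oddB ?n_odd //; lia.
have N_gt0 : 0 < n - 2 by lia.
pose a0 := Ordinal N_gt0.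
pose Q := [set [set s; v i] | i : 'I_(n - 2)] :|: [set [set t; v a0]].
exists Q; split; [|split].
- apply/subsetP => e; rewrite !inE => /orP[/imsetP[i _ ->] | /eqP->];
    by rewrite cards2 [_ == v _]eq_sym ?v_neq_s ?v_neq_t.
- rewrite (leq_trans (leq_card_setU _ _)) // cards1 (_ : n - 1 = n - 2 + 1); last lia.
  by rewrite leq_add2r (leq_trans (leq_imset_card _ _)) ?card_ord.
move=> e /[!inE] /cards2P[x [y [xy ->]]].
apply: (expressible_edge v_inj v_neq_s v_neq_t N_odd (a0 := a0)) => //; first lia.
- by move=> i; apply: expr_base; rewrite inE; apply/orP; left; apply/imsetP; exists i.
- by apply: expr_base; rewrite !inE eqxx orbT.
Qed.
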